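(* Let $n$ be even, $\alpha$ a character of $F^*$, and $\pi$ a representation of $G_n$. Then $\pi$ is $(H_n,\chi_\alpha)$-distinguished if and only if it is $(H_n,\chi_\alpha^{-1})$-distinguished.
   Context: $F$ non-archimedean local field; $G_n=GL(n,F)$; $\epsilon_n=diag(1,-1,1,\dots)$, $H_n=\{g:\epsilon_ng\epsilon_n=g\}\simeq G_{n/2}\times G_{n/2}$, elements $h(g_1,g_2)$ with $g_1$ on odd-indexed and $g_2$ on even-indexed basis vectors; $\chi_\alpha(h(g_1,g_2))=\alpha(\det g_1/\det g_2)$. $\pi$ is $(H_n,\chi)$-distinguished if $Hom_{H_n}(\pi,\chi)\ne0$. *)

From HB Require Import structures.
From mathcomp Require Import all_boot all_order all_algebra.
From mathcomp Require Import reals.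
From mathcomp Require Import complex.
Set Implicit Arguments. Unset Strict Implicit. Unset Printing Implicit Defensive.
Import Order.TTheory GRing.Theory Num.Theory.
Local Open Scope ring_scope.

Definition is_nonarch_local_field (R : realType) (F : fieldType)
    (absF : F -> R) : Prop :=
  [/\ (forall x, 0 <= absF x) /\ (forall x, absF x = 0 <-> x = 0),
      (forall x y, absF (x * y) = absF x * absF y) /\
      (forall x y, absF (x + y) <= Num.max (absF x) (absF y)),
      (* discreteness (and nontriviality): a uniformizer *)
      (exists w : F, 0 < absF w < 1 /\
         forall x, x != 0 -> exists z : int, absF x = absF w ^ z),
      (forall u : nat -> F,
         (forall e : R, 0 < e -> exists N, forall p q, (N <= p)%N -> (N <= q)%N ->
             absF (u p - u q) < e) ->
         exists l, forall e : R, 0 < e -> exists N, forall p, (N <= p)%N ->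
             absF (u p - l) < e) &
      (* finite residue field *)
      (exists s : seq F, forall x, absF x <= 1 ->
         exists2 y, y \in s & absF (x - y) < 1)].

(* A (smooth = continuous) character of F^* with values in C^*, given as a
   function on F whose value at 0 is irrelevant. *)
Definition is_character (R : realType) (F : fieldType) (absF : F -> R)
    (alpha : F -> R[i]) : Prop :=
  [/\ forall x, x != 0 -> alpha x != 0,
      forall x y, x != 0 -> y != 0 -> alpha (x * y) = alpha x * alpha y &
      exists2 e : R, 0 < e & forall x, absF (x - 1) < e -> alpha x = 1].

Definition inv_char (R : realType) (F : fieldType) (alpha : F -> R[i]) : F -> R[i] :=
  fun x => (alpha x)^-1.

(* 0-based indices: the paper's odd-indexed basis vectors e_1, e_3, ... are
   the indices 0, 2, 4, ... ; the even-indexed ones are 1, 3, 5, ... *)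
Definition idx_odd (m : nat) (i : 'I_m) : 'I_(m.*2) :=
  Ordinal (etrans (ltn_double i m) (ltn_ord i)).
Definition idx_even (m : nat) (i : 'I_m) : 'I_(m.*2) :=
  Ordinal (etrans (ltn_Sdouble i m) (ltn_ord i)).

Definition eps_mx (F : fieldType) (n : nat) : 'M[F]_n :=
  \matrix_(i, j) (if i == j then (-1) ^+ (nat_of_ord i) else 0).

Definition inG (F : fieldType) (n : nat) (g : 'M[F]_n) : bool := g \in unitmx.

Definition inH (F : fieldType) (m : nat) (g : 'M[F]_(m.*2)) : bool :=
  (g \in unitmx) && (eps_mx F (m.*2) *m g *m eps_mx F (m.*2) == g).

(* for h = h(g1, g2): g1 on odd-indexed, g2 on even-indexed basis vectors *)
Definition blk1 (F : fieldType) (m : nat) (g : 'M[F]_(m.*2)) : 'M[F]_m :=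
  \matrix_(i, j) g (idx_odd i) (idx_odd j).
Definition blk2 (F : fieldType) (m : nat) (g : 'M[F]_(m.*2)) : 'M[F]_m :=
  \matrix_(i, j) g (idx_even i) (idx_even j).

Definition chi (R : realType) (F : fieldType) (m : nat) (alpha : F -> R[i])
    (h : 'M[F]_(m.*2)) : R[i] :=
  alpha (\det (blk1 h) / \det (blk2 h)).

(* pi : G_n -> GL(V), V a complex vector space, smooth: every vector has an
   open stabilizer, i.e. is fixed by a neighbourhood of 1 in G_n. *)
Definition is_smooth_rep (R : realType) (F : fieldType) (absF : F -> R)
    (n : nat) (V : lmodType R[i]) (pi : 'M[F]_n -> V -> V) : Prop :=
  [/\ forall g, inG g -> forall (a : R[i]) (u v : V),
        pi g (a *: u + v) = a *: pi g u + pi g v,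
      forall v, pi 1%:M v = v,
      forall g h, inG g -> inG h -> forall v, pi (g *m h) v = pi g (pi h v) &
      forall v, exists2 e : R, 0 < e & forall g, inG g ->
        (forall i j, absF (g i j - (1%:M : 'M[F]_n) i j) < e) -> pi g v = v].

Definition distinguished (R : realType) (F : fieldType) (m : nat)
    (V : lmodType R[i]) (pi : 'M[F]_(m.*2) -> V -> V) (ch : 'M[F]_(m.*2) -> R[i])
    : Prop :=
  exists lam : V -> R[i],
    [/\ forall (a : R[i]) (u v : V), lam (a *: u + v) = a * lam u + lam v,
        exists v, lam v != 0 &
        forall h, inH h -> forall v, lam (pi h v) = ch h * lam v].

(* Conjugation by the permutation matrix w exchanging each odd-indexed basis
   vector with the following even-indexed one normalizes H_n and swaps the two
   blocks of h(g1, g2), so chi_alpha(w h w^-1) = chi_alpha^-1(h) and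
   lambda |-> lambda o pi(w) maps Hom_H(pi, chi_alpha) into
   Hom_H(pi, chi_alpha^-1).
   Since F may have characteristic 2, the blocks of an element of H_n may be
   singular, and chi_alpha then involves the junk value alpha(0); in that case
   eps_n = 1, so w lies in H_n with g1 = 0, and distinction forces
   alpha(0)^2 = chi_alpha(w)^2 = chi_alpha(w^2) = 1. *)
From mathcomp Require Import all_boot all_algebra fingroup perm.
From mathcomp Require Import reals complex.
Set Implicit Arguments. Unset Strict Implicit. Unset Printing Implicit Defensive.
Import GRing.Theory.
Local Open Scope ring_scope.

Lemma det_eq0_dim_gt0 (R : comNzRingType) n (A : 'M[R]_n) :
  \det A = 0 -> (0 < n)%N.
Proof. by case: n A => // A; rewrite det_mx00 => /eqP; rewrite oner_eq0. Qed.

Section ParitySwap.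

Variable m : nat.

Definition interleave (s : 'I_m + 'I_m) : 'I_(m.*2) :=
  match s with inl i => idx_odd i | inr i => idx_even i end.

Lemma half_ord_lt (k : 'I_(m.*2)) : (k./2 < m)%N.
Proof. by rewrite ltn_half_double. Qed.

Definition deinterleave (k : 'I_(m.*2)) : 'I_m + 'I_m :=
  let i := Ordinal (half_ord_lt k) in if odd k then inr i else inl i.

Lemma interleaveK : cancel interleave deinterleave.
Proof.
case=> i; rewrite /deinterleave /= ?odd_double //=; congr (_ _); apply: val_inj.
- exact: doubleK.
- exact: uphalf_double.
Qed.

Lemma deinterleaveK : cancel deinterleave interleave.
Proof.
move=> k; apply: val_inj; rewrite -[RHS](odd_double_half k) /deinterleave.
by case: (odd k).
Qed.

Lemma sum_interleave (M : nmodType) (G : 'I_(m.*2) -> M) :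
  \sum_k G k = \sum_(i < m) G (idx_odd i) + \sum_(i < m) G (idx_even i).
Proof.
rewrite (reindex interleave) ?big_sumType //.
by apply: onW_bij; exists deinterleave; [apply: interleaveK | apply: deinterleaveK].
Qed.

Definition parity_swap_fun (k : 'I_(m.*2)) : 'I_(m.*2) :=
  match deinterleave k with inl i => idx_even i | inr i => idx_odd i end.

Lemma parity_swap_funK : involutive parity_swap_fun.
Proof.
move=> k; rewrite -[in RHS](deinterleaveK k) /parity_swap_fun.
by case: (deinterleave k) => i; rewrite (interleaveK (inl i), interleaveK (inr i)).
Qed.

Definition parity_swap : 'S_(m.*2) := perm (inv_inj parity_swap_funK).

Lemma parity_swap_odd i : parity_swap (idx_odd i) = idx_even i.
Proof. by rewrite permE /parity_swap_fun (interleaveK (inl i)). Qed.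

Lemma parity_swap_even i : parity_swap (idx_even i) = idx_odd i.
Proof. by rewrite permE /parity_swap_fun (interleaveK (inr i)). Qed.

Lemma odd_parity_swap k : odd (parity_swap k) = ~~ odd k.
Proof.
rewrite -(deinterleaveK k); case: (deinterleave k) => i.
- by rewrite parity_swap_odd /= odd_double.
- by rewrite parity_swap_even /= odd_double.
Qed.

Lemma parity_swap_mulg : (parity_swap * parity_swap)%g = 1%g.
Proof. by apply/permP => k; rewrite permM perm1 !permE parity_swap_funK. Qed.

End ParitySwap.

Section Blocks.

Variables (F : fieldType) (m : nat).
Implicit Types g h : 'M[F]_(m.*2).

Lemma eps_conjE n (A : 'M[F]_n) i j :
  (eps_mx F n *m A *m eps_mx F n) i j = (-1) ^+ (i + j) * A i j.
Proof.
have eps_diag k l : eps_mx F n k l = (k == l)%:R * (-1) ^+ k.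
  by rewrite mxE; case: eqP; rewrite ?mul1r ?mul0r.
rewrite mxE (bigD1 j) //= big1 => [|k kj]; last first.
  by rewrite eps_diag (negbTE kj) mul0r mulr0.
rewrite mxE (bigD1 i) //= big1 => [|k ki]; last first.
  by rewrite eps_diag eq_sym (negbTE ki) !mul0r.
by rewrite !eps_diag !eqxx !mul1r !addr0 exprD mulrAC mulrC mulrA.
Qed.

Lemma inH_entry h :
  inH h -> forall i j : 'I_(m.*2), (-1) ^+ (i + j) * h i j = h i j.
Proof. by case/andP=> _ /eqP hE i j; rewrite -eps_conjE hE. Qed.

Definition parity_conj h : 'M[F]_(m.*2) :=
  perm_mx (parity_swap m) *m h *m perm_mx (parity_swap m)^-1.

Lemma parity_conjE h i j :
  parity_conj h i j = h (parity_swap m i) (parity_swap m j).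
Proof. by rewrite /parity_conj -row_permE -col_permE !mxE. Qed.

Lemma inH_parity_conj h : inH h -> inH (parity_conj h).
Proof.
move=> Hh; apply/andP; split.
  by rewrite !unitmx_mul !unitmx_perm; case/andP: Hh => ->.
apply/eqP/matrixP => i j; rewrite eps_conjE !parity_conjE -[RHS]inH_entry //.
by rewrite -signr_odd -[in RHS]signr_odd !oddD !odd_parity_swap addbN addNb negbK.
Qed.

Lemma blk1_parity_conj h : blk1 (parity_conj h) = blk2 h.
Proof.
by apply/matrixP => i j; rewrite [LHS]mxE parity_conjE !parity_swap_odd mxE.
Qed.

Lemma blk2_parity_conj h : blk2 (parity_conj h) = blk1 h.
Proof.
by apply/matrixP => i j; rewrite [LHS]mxE parity_conjE !parity_swap_even mxE.
Qed.

Definition parity_block_diag g :=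
  forall i j : 'I_(m.*2), odd i != odd j -> g i j = 0.

Lemma blk1M g h : parity_block_diag g -> blk1 (g *m h) = blk1 g *m blk1 h.
Proof.
move=> g_diag; apply/matrixP => i j; rewrite !mxE sum_interleave.
rewrite [X in _ + X]big1 ?addr0 => [|k _]; last first.
  by rewrite g_diag ?mul0r //= !odd_double.
by apply: eq_bigr => k _; rewrite !mxE.
Qed.

Lemma blk1_1 : blk1 (1%:M : 'M[F]_(m.*2)) = 1%:M.
Proof.
apply/matrixP => i j; rewrite !mxE.
suff -> : (idx_odd i == idx_odd j) = (i == j) by [].
by apply/eqP/eqP => [/(congr1 val)/double_inj/val_inj | ->].
Qed.

Lemma inH_parity_block_diag h :
  (2%:R : F) != 0 -> inH h -> parity_block_diag h.
Proof.
move=> two_nz Hh i j ij; have odd_ij : odd (i + j).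
  by rewrite oddD; move: ij; case: (odd i); case: (odd j).
have := inH_entry Hh i j; rewrite -signr_odd odd_ij expr1 mulN1r => /eqP.
rewrite eq_sym -subr_eq0 opprK -mulr2n -mulr_natr mulf_eq0 (negbTE two_nz) orbF.
by move/eqP.
Qed.

Lemma det_blk1_neq0 h : (2%:R : F) != 0 -> inH h -> \det (blk1 h) != 0.
Proof.
move=> two_nz Hh; have hG : h \in unitmx by case/andP: Hh.
have := congr1 determinant (blk1M (invmx h) (inH_parity_block_diag two_nz Hh)).
rewrite mulmxV // blk1_1 det1 det_mulmx => det_prod.
by apply/eqP => det0; move: det_prod; rewrite det0 mul0r => /eqP; rewrite oner_eq0.
Qed.

Lemma det_blk2_neq0 h : (2%:R : F) != 0 -> inH h -> \det (blk2 h) != 0.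
Proof.
by move=> two_nz /inH_parity_conj Hh; rewrite -blk1_parity_conj det_blk1_neq0.
Qed.

Lemma inH_char2 g : (2%:R : F) = 0 -> g \in unitmx -> inH g.
Proof.
move=> two0 gG; have m1 : (-1 : F) = 1.
  by apply/eqP; rewrite eq_sym -subr_eq0 opprK -mulr2n two0.
have eps1 : eps_mx F (m.*2) = 1%:M.
  by apply/matrixP => i j; rewrite !mxE m1 expr1n; case: eqP.
by rewrite /inH gG eps1 mul1mx mulmx1 eqxx.
Qed.

Lemma det_blk1_parity_swap : (0 < m)%N ->
  \det (blk1 (perm_mx (parity_swap m) : 'M[F]_(m.*2))) = 0.
Proof.
case: m => // m' _.
suff -> : blk1 (perm_mx (parity_swap m'.+1)) = 0 :> 'M[F]_m'.+1 by rewrite det0.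
apply/matrixP => i j; rewrite !mxE parity_swap_odd.
by case: eqP => // /(congr1 (odd \o val)); rewrite /= !odd_double.
Qed.

End Blocks.

Lemma multiplicative_invf (F K : fieldType) (alpha : F -> K) :
  (forall x, x != 0 -> alpha x != 0) ->
  (forall x y, x != 0 -> y != 0 -> alpha (x * y) = alpha x * alpha y) ->
  forall x, x != 0 -> alpha x^-1 = (alpha x)^-1.
Proof.
move=> alpha_nz alphaM x x_nz; apply/esym/mulr1_eq.
have alpha1 : alpha 1 = 1.
  apply: (mulIf (alpha_nz 1 (oner_neq0 F))).
  by rewrite mul1r -alphaM ?oner_neq0 ?mulr1.
by rewrite -alphaM ?invr_eq0 // divff.
Qed.

Section Distinction.

Variables (R : realType) (F : fieldType) (m : nat) (V : lmodType R[i]).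
Variable pi : 'M[F]_(m.*2) -> V -> V.
Hypothesis pi_linear : forall g, inG g -> forall (a : R[i]) (u v : V),
  pi g (a *: u + v) = a *: pi g u + pi g v.
Hypothesis pi1 : forall v, pi 1%:M v = v.
Hypothesis piM : forall g h, inG g -> inG h -> forall v,
  pi (g *m h) v = pi g (pi h v).

Lemma distinguished_ch_mul_eq1 ch g h :
  distinguished pi ch -> inH g -> inH h -> g *m h = 1%:M -> ch g * ch h = 1.
Proof.
case=> lam [_ [v0 nz_v0] lamE] Hg Hh gh1.
have [gG hG] : inG g /\ inG h by case/andP: Hg; case/andP: Hh.
apply: (mulIf nz_v0); rewrite mul1r -mulrA -!lamE //.
by rewrite -piM // gh1 pi1.
Qed.

Lemma distinguished_conj ch1 ch2 g g' :
  g *m g' = 1%:M ->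
  (forall h, inH h -> inH (g *m h *m g')) ->
  (forall h, inH h -> ch1 (g *m h *m g') = ch2 h) ->
  distinguished pi ch1 -> distinguished pi ch2.
Proof.
move=> gg' conjH ch12 [lam [lam_linear [v0 nz_v0] lamE]].
have g'g := mulmx1C gg'.
have [gG g'G] : inG g /\ inG g'.
  by split; [case: (mulmx1_unit gg') | case: (mulmx1_unit g'g)].
exists (fun v => lam (pi g v)); split.
- by move=> a u v; rewrite pi_linear // lam_linear.
- by exists (pi g' v0); rewrite -piM // gg' pi1.
- move=> h Hh v; have hG : inG h by case/andP: Hh.
  have ghg'G : inG (g *m h *m g') by case/andP: (conjH h Hh).
  rewrite -ch12 // -lamE ?conjH // -[pi g (pi h v)]piM //.
  by rewrite -[pi _ (pi g v)]piM // -mulmxA g'g mulmx1.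
Qed.

Lemma distinguished_alpha0_sq (alpha : F -> R[i]) (h : 'M[F]_(m.*2)) :
  distinguished pi (chi alpha) -> inH h ->
  \det (blk1 h) / \det (blk2 h) = 0 -> alpha 0 * alpha 0 = 1.
Proof.
move=> D Hh /eqP; rewrite mulf_eq0 invr_eq0 => det_eq0.
have [two0 | two_nz] := eqVneq (2%:R : F) 0; last first.
  move: det_eq0.
  by rewrite (negbTE (det_blk1_neq0 two_nz Hh)) (negbTE (det_blk2_neq0 two_nz Hh)).
have m_gt0 : (0 < m)%N by case/orP: det_eq0 => /eqP/det_eq0_dim_gt0.
set w := perm_mx (parity_swap m) : 'M[F]_(m.*2).
have wH : inH w by rewrite inH_char2 ?unitmx_perm.
have ww1 : w *m w = 1%:M by rewrite -perm_mxM parity_swap_mulg perm_mx1.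
have chi_w : chi alpha w = alpha 0 by rewrite /chi det_blk1_parity_swap // mul0r.
by rewrite -chi_w (distinguished_ch_mul_eq1 D).
Qed.

Lemma distinguished_chi_inv (alpha beta : F -> R[i]) :
  (forall x, x != 0 -> alpha x^-1 = (alpha x)^-1) ->
  (forall x, beta x = (alpha x)^-1) ->
  distinguished pi (chi alpha) -> distinguished pi (chi beta).
Proof.
move=> alphaV betaE D.
have swap_mxV : perm_mx (parity_swap m) *m perm_mx (parity_swap m)^-1 = 1%:M
    :> 'M[F]_(m.*2).
  by rewrite -perm_mxM mulgV perm_mx1.
apply: (distinguished_conj swap_mxV (@inH_parity_conj F m) _ D) => h Hh.
rewrite -[_ *m h *m _]/(parity_conj h) /chi blk1_parity_conj blk2_parity_conj.
rewrite betaE -invf_div.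
set r := \det (blk1 h) / \det (blk2 h).
have [r0 | r_nz] := eqVneq r 0; last by rewrite alphaV.
by have := distinguished_alpha0_sq D Hh r0; rewrite r0 invr0 => /mulr1_eq ->.
Qed.

End Distinction.

Theorem mainTheorem8 (R : realType) (F : fieldType) (absF : F -> R)
    (HF : is_nonarch_local_field absF) (m : nat) (alpha : F -> R[i])
    (Halpha : is_character absF alpha) (V : lmodType R[i])
    (pi : 'M[F]_(m.*2) -> V -> V) (Hpi : is_smooth_rep absF pi) :
  distinguished pi (chi alpha) <-> distinguished pi (chi (inv_char alpha)).
Proof.
case: Hpi => pi_linear pi1 piM _; case: Halpha => alpha_nz alphaM _.
have alphaV := multiplicative_invf alpha_nz alphaM.
split=> D.
- by apply: (distinguished_chi_inv pi_linear pi1 piM (beta := inv_char alpha)) D.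
- apply: (distinguished_chi_inv pi_linear pi1 piM (alpha := inv_char alpha)) D.
    by move=> x x_nz; rewrite /inv_char alphaV.
  by move=> x; rewrite /inv_char invrK.
Qed.
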